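(* Fix $s\in\mathbb{R}$ and a continuous $1$-periodic function $\tilde q$ with $\int_0^1\tilde q=0$. Suppose that for $\lambda$ in an open interval there are a real number $q_0(\lambda)$ and $1$-periodic $C^1$ functions $\tilde p(\lambda,\cdot)$ with $\int_0^1\tilde p(\lambda,x)\,dx=0$, depending differentiably on $\lambda$ (with $\partial_\lambda\tilde p$ and $\partial_\lambda\tilde p'$ continuous), such that \[ q_0(\lambda)=\lambda+\int_0^1\tilde p(\lambda,x)^2\,dx+s^2,\qquad \tilde q=\tilde p'+\tilde p^2-\int_0^1\tilde p^2+2s\tilde p \] (equivalently, $p=\tilde p+s$ is a periodic solution with $\int_0^1p=s$ of the Riccati equation $q_0+\tilde q=\lambda+p'+p^2$). Then $\frac{\partial q_0}{\partial\lambda}=1$; that is, the Jacobian of the transformation $(q_0,\tilde q,s)\mapsto(\lambda,\tilde q,s)$ is one. *)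

From Stdlib Require Import Reals.
From Coquelicot Require Export Coquelicot.
Open Scope R_scope.

Definition periodic1 (f : R -> R) : Prop := forall x, f (x + 1) = f x.

Definition isC1 (f : R -> R) : Prop :=
  forall x, ex_derive f x /\ continuous (Derive f) x.

Definition dlam (F : R -> R -> R) (l x : R) : R := Derive (fun m => F m x) l.

Definition dx (F : R -> R -> R) (l x : R) : R := Derive (F l) x.

Definition cont2 (G : R -> R -> R) (l x : R) : Prop :=
  continuous (fun z : R * R => G (fst z) (snd z)) (l, x).

From Stdlib Require Import Reals Lra.
From Coquelicot Require Import Coquelicot.
Open Scope R_scope.

(* With u = d/dl p~ and c = d/dl (int_0^1 p~^2), differentiating the identity
   for q~ in l gives the linear equation u' + 2 (p~ + s) u = c, and q0' = 1 + c.
   Differentiation in l commutes with integration and with translation, so u is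
   1-periodic with mean zero; hence u vanishes at some x0 and at x0 + 1.  With the
   integrating factor E = exp (2 int (p~ + s)) the equation reads (u E)' = c E,
   and the mean value theorem on [x0, x0 + 1] gives c = 0. *)

Lemma locally_open_interval (P : R -> Prop) (a b l : R) :
  a < l < b -> (forall m, a < m < b -> P m) -> locally l P.
Proof.
  intros Hl HP. apply (locally_interval P l a b); try (simpl; lra).
  intros m Ha Hb. now apply HP.
Qed.

Lemma continuous_of_cont2 (G : R -> R -> R) (l x : R) :
  cont2 G l x -> continuous (G l) x.
Proof.
  intros H.
  apply (continuous_comp_2 (fun _ => l) (fun y => y) G).
  - apply continuous_const.
  - apply continuous_id.
  - exact H.
Qed.

Lemma RInt_Derive_C1 (f : R -> R) (x y : R) :
  isC1 f -> RInt (Derive f) x y = f y - f x.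
Proof. intros Hf. apply RInt_Derive; intros t _; apply Hf. Qed.

Lemma is_derive_RInt_continuous (h : R -> R) (a x : R) :
  (forall y, continuous h y) -> is_derive (fun y => RInt h a y) x (h x).
Proof.
  intros Hh. apply is_derive_RInt with a; [|apply Hh].
  apply filter_forall. intros y. apply (RInt_correct (V:=R_CompleteNormedModule)).
  apply (ex_RInt_continuous (V:=R_CompleteNormedModule)). intros; apply Hh.
Qed.

Lemma is_derive_loc_const_eq0 (f : R -> R) (k l d : R) :
  locally l (fun m => f m = k) -> is_derive f l d -> d = 0.
Proof.
  intros Hk Hd.
  rewrite <- (is_derive_unique _ _ _ Hd).
  apply is_derive_unique.
  apply (is_derive_ext_loc (fun _ => k)).
  - revert Hk. apply filter_imp. intros m E. now rewrite E.
  - apply (is_derive_const (V:=R_NormedModule)).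
Qed.

Lemma RInt_eq0_has_root (f : R -> R) (a b : R) :
  a < b -> (forall x, continuous f x) -> RInt f a b = 0 ->
  exists x, a <= x <= b /\ f x = 0.
Proof.
  intros Hab Hf Hmean.
  apply Classical_Prop.NNPP. intros Hno.
  assert (Hroot : forall x, a <= x <= b -> f x <> 0)
    by (intros x Hx E; apply Hno; eauto).
  assert (Hsign : forall x, a <= x <= b -> 0 < f a * f x).
  { intros x Hx. apply Rnot_le_lt. intros Hle.
    assert (Hc : continuity f)
      by (intros y; apply continuity_pt_filterlim, Hf).
    destruct (IVT_gen f a x 0 Hc) as [z [Hz Ez]].
    - unfold Rmin, Rmax; destruct Rle_dec; nra.
    - apply (Hroot z); auto. revert Hz. unfold Rmin, Rmax.
      destruct Rle_dec; intros; lra. }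
  assert (Hpos : 0 < RInt (fun x => scal (f a) (f x)) a b).
  { apply RInt_gt_0; auto.
    - intros x Hx. apply Hsign. lra.
    - intros x _. apply (continuous_mult (fun _ => f a) f).
      + apply continuous_const.
      + apply Hf. }
  rewrite (RInt_scal (V:=R_CompleteNormedModule)), Hmean in Hpos.
  - change (0 < f a * 0) in Hpos. lra.
  - apply (ex_RInt_continuous (V:=R_CompleteNormedModule)). intros; apply Hf.
Qed.

Lemma linear_ode_const_rhs_eq0 (u h : R -> R) (c x0 x1 : R) :
  (forall x, is_derive u x (c - h x * u x)) -> (forall x, continuous h x) ->
  x0 < x1 -> u x0 = 0 -> u x1 = 0 -> c = 0.
Proof.
  intros Hu Hh Hx01 Hu0 Hu1.
  set (H := fun x => RInt h 0 x).
  assert (HH : forall x, is_derive H x (h x))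
    by (intros x; apply is_derive_RInt_continuous, Hh).
  assert (Hg : forall x, is_derive (fun y => u y * exp (H y)) x (c * exp (H x))).
  { intros x. auto_derive.
    - split; [exists (c - h x * u x); apply Hu|].
      split; [exists (h x); apply HH|]. exact I.
    - replace (Derive (fun y : R => u y) x) with (c - h x * u x)
        by (symmetry; apply is_derive_unique, Hu).
      replace (Derive (fun y : R => H y) x) with (h x)
        by (symmetry; apply is_derive_unique, HH).
      ring. }
  destruct (MVT_gen (fun y => u y * exp (H y)) x0 x1 (fun y => c * exp (H y)))
    as [xi [_ Hxi]].
  - intros x _. apply Hg.
  - intros x _. apply continuity_pt_filterlim.
    apply (ex_derive_continuous (V:=R_NormedModule) (fun y => u y * exp (H y))).
    eexists. apply Hg.
  - rewrite Hu0, Hu1 in Hxi.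
    assert (Hexp := exp_pos (H xi)).
    assert (Hzero : c * exp (H xi) = 0) by nra.
    apply Rmult_integral in Hzero. lra.
Qed.

Lemma is_derive_RInt_dlam (F : R -> R -> R) (l a b : R) :
  locally l (fun m => forall t, ex_derive (fun m' => F m' t) m) ->
  (forall t, cont2 (dlam F) l t) ->
  locally l (fun m => forall t, continuous (F m) t) ->
  is_derive (fun m => RInt (F m) a b) l (RInt (dlam F l) a b).
Proof.
  intros Hdl Hcont HF.
  apply (is_derive_RInt_param F a b l).
  - revert Hdl. apply filter_imp. auto.
  - intros t _. apply continuity_2d_pt_filterlim, Hcont.
  - revert HF. apply filter_imp. intros m Hm.
    apply (ex_RInt_continuous (V:=R_CompleteNormedModule)). auto.
Qed.

Lemma is_derive_dlam (F : R -> R -> R) (l x : R) :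
  locally l (fun m => isC1 (F m)) ->
  (forall y, ex_derive (fun m => F m y) l) ->
  locally l (fun m => forall y, ex_derive (fun m' => dx F m' y) m) ->
  (forall y, cont2 (dlam (dx F)) l y) ->
  is_derive (dlam F l) x (dlam (dx F) l x).
Proof.
  intros HC1 Hdl Hdlx Hcont.
  assert (Hdlam_int : forall y, dlam F l y = dlam F l 0 + RInt (dlam (dx F) l) 0 y).
  { intros y. apply is_derive_unique.
    apply (is_derive_ext_loc (fun m => F m 0 + RInt (dx F m) 0 y)).
    - revert HC1. apply filter_imp. intros m Hm.
      unfold dx. rewrite RInt_Derive_C1 by exact Hm. lra.
    - apply (is_derive_plus (fun m => F m 0) (fun m => RInt (dx F m) 0 y)).
      + apply Derive_correct, Hdl.
      + apply is_derive_RInt_dlam; auto.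
        revert HC1. apply filter_imp. intros m Hm t. apply Hm. }
  apply (is_derive_ext (fun y => dlam F l 0 + RInt (dlam (dx F) l) 0 y)).
  { intros y. now rewrite <- Hdlam_int. }
  assert (HW : forall y, continuous (dlam (dx F) l) y)
    by (intros y; apply continuous_of_cont2, Hcont).
  replace (dlam (dx F) l x) with (0 + dlam (dx F) l x) by ring.
  apply (is_derive_plus (fun _ => dlam F l 0) (fun y => RInt (dlam (dx F) l) 0 y)).
  - apply (is_derive_const (V:=R_NormedModule)).
  - now apply is_derive_RInt_continuous.
Qed.

Lemma periodic1_dlam (F : R -> R -> R) (l : R) :
  locally l (fun m => periodic1 (F m)) -> periodic1 (dlam F l).
Proof.
  intros HP x. apply Derive_ext_loc.
  revert HP. apply filter_imp. auto.
Qed.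

Lemma is_derive_of_riccati (F : R -> R -> R) (q I : R -> R) (s l x : R) :
  locally l (fun m => I m = dx F m x + F m x ^ 2 + 2 * s * F m x - q x) ->
  ex_derive (fun m => F m x) l -> ex_derive (fun m => dx F m x) l ->
  is_derive I l (dlam (dx F) l x + 2 * (F l x + s) * dlam F l x).
Proof.
  intros HI HF HFx.
  apply (is_derive_ext_loc (fun m => dx F m x + F m x ^ 2 + 2 * s * F m x - q x)).
  { revert HI. apply filter_imp. auto. }
  auto_derive.
  - auto.
  - unfold dlam. ring.
Qed.

Theorem lemma1
  (s : R) (qt : R -> R) (a b : R) (q0 : R -> R) (pt : R -> R -> R)
  (* q~ continuous, 1-periodic, mean zero *)
  (Hqt_cont : forall x, continuous qt x)
  (Hqt_per : periodic1 qt)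
  (Hqt_mean : RInt qt 0 1 = 0)
  (* for lambda in (a,b): p~(lambda,.) is 1-periodic, C^1, mean zero *)
  (Hpt_per : forall l, a < l < b -> periodic1 (pt l))
  (Hpt_C1 : forall l, a < l < b -> isC1 (pt l))
  (Hpt_mean : forall l, a < l < b -> RInt (pt l) 0 1 = 0)
  (* differentiable dependence on lambda, with d_lambda p~ and d_lambda p~'
     existing and (jointly) continuous *)
  (Hpt_dl : forall l x, a < l < b -> ex_derive (fun m => pt m x) l)
  (Hpt_dl_cont : forall l x, a < l < b -> cont2 (dlam pt) l x)
  (Hpt_dlx : forall l x, a < l < b -> ex_derive (fun m => dx pt m x) l)
  (Hpt_dlx_cont : forall l x, a < l < b -> cont2 (dlam (dx pt)) l x)
  (* the two identities *)
  (Hq0 : forall l, a < l < b ->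
     q0 l = l + RInt (fun x => (pt l x) ^ 2) 0 1 + s ^ 2)
  (Hqt : forall l x, a < l < b ->
     qt x = dx pt l x + (pt l x) ^ 2 - RInt (fun y => (pt l y) ^ 2) 0 1
            + 2 * s * pt l x) :
  forall l, a < l < b -> is_derive q0 l 1.
Proof.
  intros l Hl.
  pose proof (fun P => locally_open_interval P a b l Hl) as Hnear.
  set (Isq := fun m => RInt (fun x => pt m x ^ 2) 0 1).
  set (u := dlam pt l).
  assert (HI : forall x, is_derive Isq l (dlam (dx pt) l x + 2 * (pt l x + s) * u x)).
  { intros x. apply is_derive_of_riccati with qt; auto.
    apply Hnear. intros m Hm. rewrite (Hqt m x Hm). unfold Isq. lra. }
  assert (Hu' : forall x, is_derive u x (Derive Isq l - 2 * (pt l x + s) * u x)).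
  { intros x. rewrite (is_derive_unique _ _ _ (HI x)).
    replace (_ + _ - _) with (dlam (dx pt) l x) by ring.
    apply is_derive_dlam; auto. }
  assert (Hu_mean : RInt u 0 1 = 0).
  { apply (is_derive_loc_const_eq0 (fun m => RInt (pt m) 0 1) 0 l); auto.
    apply is_derive_RInt_dlam; auto.
    apply Hnear. intros m Hm t.
    apply (ex_derive_continuous (V:=R_NormedModule)), Hpt_C1; auto. }
  destruct (RInt_eq0_has_root u 0 1) as (x0 & _ & Hux0); auto with real.
  { intros x. apply continuous_of_cont2; auto. }
  assert (HI0 : Derive Isq l = 0).
  { apply (linear_ode_const_rhs_eq0 u (fun x => 2 * (pt l x + s)) _ x0 (x0 + 1));
      auto; try lra.
    - intros x. apply (ex_derive_continuous (V:=R_NormedModule)).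
      auto_derive. apply (Hpt_C1 l Hl x).
    - rewrite (periodic1_dlam pt l); auto. }
  apply (is_derive_ext_loc (fun m => m + Isq m + s ^ 2)).
  { apply Hnear. intros m Hm. now rewrite Hq0. }
  auto_derive.
  - eexists. apply (HI 0).
  - replace (Derive (fun x : R => Isq x) l) with 0 by (symmetry; exact HI0).
    ring.
Qed.
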